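(* Let $L=\{<,\ldots\}$ be a countable first order language containing a binary relation symbol $<$, and let $T$ be a complete $L$-theory with Skolem functions in which $<$ is interpreted as a linear order. Then: (i) If $T$ satisfies the inaccessibility scheme, then $T$ satisfies the regularity scheme for formulas with $|\bar{x}|=1$. (ii) If $T$ satisfies the regularity scheme for formulas with $|\bar{x}|=1$, then $T$ satisfies the regularity scheme (for formulas with $\bar{x}$ of arbitrary finite length).
   Context: For a formula $\varphi(\bar{x},\bar{t})$ and tuples $\bar{y}_0,\bar{y}_1$ of the same length as $\bar{x}$, write $E_{\varphi}(\bar{y}_0,\bar{y}_1;z_0)$ for $(\forall \bar{t}<z_0)(\varphi(\bar{y}_0,\bar{t})\leftrightarrow\varphi(\bar{y}_1,\bar{t}))$; here $\bar{t}<z_0$ means every coordinate of $\bar{t}$ is $<z_0$. $T$ satisfies the inaccessibility scheme if for every $L$-formula $\varphi(\bar{x},\bar{t})$ (with $\bar{x}$ of any finite length), $T\models (\forall z_0)(\exists z_1>z_0)(\forall\bar{y}_0)(\exists\bar{y}_1<z_1)E_{\varphi}(\bar{y}_0,\bar{y}_1;z_0)$. ''$T$ has Skolem functions'' means that for every formula $\theta(y,\bar{x})$ there is a term $\tau(\bar{x})$ of $L$ with $T\models \forall\bar{x}(\exists y\,\theta(y,\bar{x})\to\theta(\tau(\bar{x}),\bar{x}))$. For $\bar{x}=(x_1,\ldots,x_n)$ and a formula $\chi(\bar{x})$ with parameters from a model $M$, $\chi(\bar{x})$ is $\bar{x}$-unbounded in $M$ if $M\models(\forall\alpha_1)(\exists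 x_1>\alpha_1)\cdots(\forall\alpha_n)(\exists x_n>\alpha_n)\chi(\bar{x})$; otherwise it is $\bar{x}$-bounded. $T$ satisfies the regularity scheme (for formulas with $|\bar{x}|=k$, resp. for all $\bar{x}$) if for every $L$-formula $\varphi(\bar{x},\bar{y},\bar{t})$ (with $|\bar{x}|=k$, resp. arbitrary), every model $M\models T$, every $y_0\in M$ and every $\bar{b}\in M$ with $|\bar{b}|=|\bar{t}|$: if $(\exists\bar{y}<y_0)\varphi(\bar{x},\bar{y},\bar{b})$ is $\bar{x}$-unbounded in $M$, then there is $\bar{y}_1\in M$ with $\bar{y}_1<y_0$ (coordinatewise) such that $\varphi(\bar{x},\bar{y}_1,\bar{b})$ is $\bar{x}$-unbounded in $M$. *)

From HB Require Import structures.
From mathcomp Require Import all_boot.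
Set Implicit Arguments. Unset Strict Implicit. Unset Printing Implicit Defensive.

Record language := Language {
  Fsym : countType;              (* function symbols (constants = arity 0) *)
  Rsym : countType;
  farity : Fsym -> nat;
  rarity : Rsym -> nat;
  ltsym : Rsym;
  ltsym_arity : rarity ltsym = 2 }.

Section FOL.
Variable L : language.

Inductive term := Var of nat | App of Fsym L & seq term.

Inductive formula :=
  | Bot
  | Eq of term & term
  | Rel of Rsym L & seq term
  | Imp of formula & formula
  | And of formula & formula
  | Or of formula & formula
  | Forall of nat & formula
  | Exists of nat & formula.

Definition Neg (f : formula) := Imp f Bot.

Fixpoint wf_term (t : term) : bool :=
  match t with
  | Var _ => true
  | App f ts => (size ts == farity f) && all wf_term ts
  end.

Fixpoint vars_term (t : term) : seq nat :=
  match t with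
  | Var n => [:: n]
  | App f ts => flatten (map vars_term ts)
  end.

Fixpoint wf_formula (f : formula) : bool :=
  match f with
  | Bot => true
  | Eq t1 t2 => wf_term t1 && wf_term t2
  | Rel r ts => (size ts == rarity r) && all wf_term ts
  | Imp f1 f2 | And f1 f2 | Or f1 f2 => wf_formula f1 && wf_formula f2
  | Forall _ f1 | Exists _ f1 => wf_formula f1
  end.

Fixpoint fv (f : formula) : seq nat :=
  match f with
  | Bot => [::]
  | Eq t1 t2 => vars_term t1 ++ vars_term t2
  | Rel r ts => flatten (map vars_term ts)
  | Imp f1 f2 | And f1 f2 | Or f1 f2 => fv f1 ++ fv f2
  | Forall x f1 | Exists x f1 => filter (fun v => v != x) (fv f1)
  end.

Definition sentence (f : formula) : bool := wf_formula f && (fv f == [::]).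

(* L-structures (nonempty); symbols are interpreted on argument lists, only
   lists of the correct arity matter for well-formed formulas *)
Record structure := Structure {
  carrier :> Type;
  inhabitant : carrier;
  interpF : Fsym L -> seq carrier -> carrier;
  interpR : Rsym L -> seq carrier -> Prop }.

Section Sem.
Variable M : structure.

Definition upd (e : nat -> M) (x : nat) (a : M) : nat -> M :=
  fun v => if v == x then a else e v.

Fixpoint upd_list (e : nat -> M) (xs : seq nat) (vs : seq M) : nat -> M :=
  match xs, vs with
  | x :: xs', v :: vs' => upd_list (upd e x v) xs' vs'
  | _, _ => e
  end.

Fixpoint eval (e : nat -> M) (t : term) : M :=
  match t with
  | Var n => e n
  | App f ts => @interpF M f (map (eval e) ts)
  end.

Fixpoint sat (e : nat -> M) (f : formula) : Prop :=
  match f with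
  | Bot => False
  | Eq t1 t2 => eval e t1 = eval e t2
  | Rel r ts => @interpR M r (map (eval e) ts)
  | Imp f1 f2 => sat e f1 -> sat e f2
  | And f1 f2 => sat e f1 /\ sat e f2
  | Or f1 f2 => sat e f1 \/ sat e f2
  | Forall x f1 => forall a : M, sat (upd e x a) f1
  | Exists x f1 => exists a : M, sat (upd e x a) f1
  end.

Definition ltM (a b : M) : Prop := @interpR M (ltsym L) [:: a; b].

Fixpoint below (z : M) (vs : seq M) : Prop :=
  match vs with
  | [::] => True
  | v :: vs' => ltM v z /\ below z vs'
  end.

Fixpoint unbounded (n : nat) (chi : seq M -> Prop) : Prop :=
  match n with
  | 0 => chi [::]
  | n'.+1 => forall a : M, exists x : M,
      ltM a x /\ unbounded n' (fun l => chi (x :: l))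
  end.

End Sem.

Definition theory := formula -> Prop.

Definition L_theory (T : theory) : Prop := forall f, T f -> sentence f.

Definition is_model (M : structure) (T : theory) : Prop :=
  forall f, T f -> forall e : nat -> M, sat e f.

Definition entails (T : theory) (f : formula) : Prop :=
  forall M : structure, is_model M T -> forall e : nat -> M, sat e f.

Definition complete (T : theory) : Prop :=
  (exists M : structure, is_model M T) /\
  forall s, sentence s -> entails T s \/ entails T (Neg s).

Definition lt_linear (T : theory) : Prop :=
  forall M : structure, is_model M T ->
    (forall a : M, ~ ltM a a) /\
    (forall a b c : M, ltM a b -> ltM b c -> ltM a c) /\
    (forall a b : M, ltM a b \/ a = b \/ ltM b a).

Definition has_skolem (T : theory) : Prop :=
  forall (theta : formula) (y : nat) (xs : seq nat),
    wf_formula theta -> y \notin xs -> {subset fv theta <= y :: xs} ->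
    exists tau : term, wf_term tau /\ {subset vars_term tau <= xs} /\
      forall M : structure, is_model M T -> forall e : nat -> M,
        (exists a : M, sat (upd e y a) theta) ->
        sat (upd e y (eval e tau)) theta.

Definition inaccessibility (T : theory) : Prop :=
  forall (phi : formula) (xs ts : seq nat),
    wf_formula phi -> uniq (xs ++ ts) -> {subset fv phi <= xs ++ ts} ->
    forall M : structure, is_model M T -> forall (e : nat -> M) (z0 : M),
      exists z1 : M, ltM z0 z1 /\
        forall ys0 : seq M, size ys0 = size xs ->
          exists ys1 : seq M, size ys1 = size xs /\ below z1 ys1 /\
            forall tv : seq M, size tv = size ts -> below z0 tv ->
              (sat (upd_list (upd_list e xs ys0) ts tv) phi <->
               sat (upd_list (upd_list e xs ys1) ts tv) phi).

Definition regularity_for (P : nat -> Prop) (T : theory) : Prop :=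
  forall (phi : formula) (xs ys ts : seq nat),
    P (size xs) ->
    wf_formula phi -> uniq (xs ++ ys ++ ts) ->
    {subset fv phi <= xs ++ ys ++ ts} ->
    forall M : structure, is_model M T ->
    forall (e : nat -> M) (y0 : M) (bs : seq M), size bs = size ts ->
      unbounded (size xs) (fun xv : seq M =>
        exists yv : seq M, size yv = size ys /\ below y0 yv /\
          sat (upd_list (upd_list (upd_list e xs xv) ys yv) ts bs) phi) ->
      exists yv1 : seq M, size yv1 = size ys /\ below y0 yv1 /\
        unbounded (size xs) (fun xv : seq M =>
          sat (upd_list (upd_list (upd_list e xs xv) ys yv1) ts bs) phi).

End FOL.

From mathcomp Require Import all_boot.
From Stdlib Require Import Classical FunctionalExtensionality.
Set Implicit Arguments. Unset Strict Implicit. Unset Printing Implicit Defensive.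

(* (i) A Skolem term tau(ys, ts) bounds phi(., ys, ts) whenever phi(., ys, ts)
   is bounded.  Inaccessibility, applied to the graph x = tau(ys, ts), makes
   tau map the parameters below some z0 into an interval below some z1.  If
   regularity failed, pick x0 > z1 with phi(x0, yv, bs) for some yv < y0: then
   tau(yv, bs) < z1 < x0 although tau(yv, bs) bounds phi(., yv, bs).
   (ii) By induction on |xs|: unboundedness of phi in the tail xs is expressed
   by a formula psi(x1, ys, ts); the induction hypothesis, applied with x1 as
   an extra parameter, shows that (exists ys < y0) psi is unbounded in x1, and
   regularity for one variable yields a single ys that works. *)

Section Valuations.
Variables (L : language) (M : structure L).
Implicit Types (e : nat -> M) (xs ys : seq nat).

Lemma upd_eq e x c : upd e x c x = c.
Proof. by rewrite /upd eqxx. Qed.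

Lemma upd_neq e x c v : v != x -> upd e x c v = e v.
Proof. by rewrite /upd => /negbTE ->. Qed.

Lemma upd_comm e x y c d : x != y -> upd (upd e x c) y d = upd (upd e y d) x c.
Proof.
move=> neq_xy; apply: functional_extensionality => v; rewrite /upd.
have [vy|] := eqVneq v y; have [vx|] := eqVneq v x => //.
by rewrite -vx vy eqxx in neq_xy.
Qed.

Lemma upd_list_upd e x c xs vs :
  x \notin xs -> upd_list (upd e x c) xs vs = upd (upd_list e xs vs) x c.
Proof.
elim: xs vs e => [|y xs IH] [|v vs] e //=.
by rewrite inE negb_or => /andP[neq_xy x_xs]; rewrite upd_comm // IH.
Qed.

Lemma upd_list_cat e xs ys vs ws : size vs = size xs ->
  upd_list e (xs ++ ys) (vs ++ ws) = upd_list (upd_list e xs vs) ys ws.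
Proof. by elim: xs vs e => [|x xs IH] [|v vs] e //= [] /IH. Qed.

Lemma upd_list_comm e xs ys vs ws : {in xs, forall v, v \notin ys} ->
  upd_list (upd_list e xs vs) ys ws = upd_list (upd_list e ys ws) xs vs.
Proof.
elim: xs vs e => [|x xs IH] [|v vs] e //= dis.
rewrite IH => [|u u_xs]; last by apply: dis; rewrite inE u_xs orbT.
by rewrite upd_list_upd // dis // mem_head.
Qed.

Fixpoint eq_eval e1 e2 t : {in vars_term t, e1 =1 e2} -> eval e1 t = eval e2 t.
Proof.
case: t => [n|f ts] /= e12; first by apply: e12; rewrite mem_head.
congr interpF; elim: ts e12 => [|t ts IHts] //= e12.
by congr cons; [apply: eq_eval | apply: IHts] => v v_t; apply: e12; rewrite mem_cat v_t ?orbT.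
Qed.

Lemma eq_sat f e1 e2 : {in fv f, e1 =1 e2} -> sat e1 f <-> sat e2 f.
Proof.
elim: f e1 e2 => [|t1 t2|r ts|f1 IH1 f2 IH2|f1 IH1 f2 IH2|f1 IH1 f2 IH2|x f IH|x f IH]
  e1 e2 e12 /=.
4-6: (have [e12_1 e12_2] : {in fv f1, e1 =1 e2} /\ {in fv f2, e1 =1 e2}
       by split=> v v_f; apply: e12; rewrite mem_cat v_f ?orbT);
     by move: (IH1 _ _ e12_1) (IH2 _ _ e12_2); tauto.
4,5: have e12x c : {in fv f, upd e1 x c =1 upd e2 x c}
       by move=> v v_f; rewrite /upd; case: eqP => // /eqP vx; apply: e12; rewrite mem_filter vx.
- by [].
- by rewrite !(@eq_eval e1 e2) // => v v_t; apply: e12; rewrite mem_cat v_t ?orbT.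
- suff -> : map (eval e1) ts = map (eval e2) ts by [].
  elim: ts e12 => [|t ts IHts] //= e12.
  by congr cons; [apply: eq_eval | apply: IHts] => v v_t; apply: e12; rewrite mem_cat v_t ?orbT.
- by split=> sat_f c; apply/(IH _ _ (e12x c)).
- by split=> -[c sat_f]; exists c; apply/(IH _ _ (e12x c)).
Qed.

Lemma eval_upd_fresh e x c t : x \notin vars_term t -> eval (upd e x c) t = eval e t.
Proof. by move=> x_t; apply: eq_eval => v v_t; apply: upd_neq; apply: contraNneq x_t => <-. Qed.

Lemma sat_upd_fresh e x c f : x \notin fv f -> sat (upd e x c) f <-> sat e f.
Proof. by move=> x_f; apply: eq_sat => v v_f; apply: upd_neq; apply: contraNneq x_f => <-. Qed.

Lemma sub_unbounded n (P Q : seq M -> Prop) :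
  (forall l, P l -> Q l) -> unbounded n P -> unbounded n Q.
Proof.
elim: n P Q => [|n IH] P Q PQ /=; first exact: PQ.
move=> unbP a; have [x [ax unbx]] := unbP a.
by exists x; split; last by apply: IH unbx => l; apply: PQ.
Qed.

End Valuations.

Definition fresh (s : seq nat) : nat := (sumn s).+1.

Lemma fresh_notin s : fresh s \notin s.
Proof.
suff le_sumn v : v \in s -> v <= sumn s by apply/negP => /le_sumn; rewrite ltnn.
elim: s => //= y s IH; rewrite inE => /predU1P[->|/IH]; first exact: leq_addr.
by move/leq_trans; apply; apply: leq_addl.
Qed.

Section UnboundedFormula.
Variable L : language.

(* The variable a plays the role of every alpha_i in the definition of
   unboundedness; it is re-bound at each quantifier. *)
Fixpoint unbounded_formula (a : nat) (xs : seq nat) (f : formula L) : formula L :=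
  if xs is x :: xs' then
    Forall a (Exists x (And (Rel (ltsym L) [:: Var L a; Var L x]) (unbounded_formula a xs' f)))
  else f.

Lemma wf_unbounded_formula a xs f : wf_formula f -> wf_formula (unbounded_formula a xs f).
Proof. by elim: xs => //= x xs IH wf_f; rewrite ltsym_arity eqxx IH. Qed.

Lemma fv_unbounded_formula a xs f v :
  v \in fv (unbounded_formula a xs f) -> v \in fv f /\ v \notin xs.
Proof.
elim: xs => [|x xs IH] //; cbn [fv unbounded_formula].
rewrite !mem_filter mem_cat inE negb_or => /and3P[va vx /orP[|/IH[-> ->]]]; last by rewrite vx.
by rewrite /= !inE (negbTE va) (negbTE vx).
Qed.

Lemma sat_unbounded_formula (M : structure L) (e : nat -> M) a xs f :
  a \notin xs -> a \notin fv f ->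
  sat e (unbounded_formula a xs f) <->
  unbounded (size xs) (fun l => sat (upd_list e xs l) f).
Proof.
elim: xs e => [|x xs IH] e //=; rewrite inE negb_or => /andP[ax a_xs] a_f.
have sat_tail c d : sat (upd (upd e a c) x d) (unbounded_formula a xs f) <->
    unbounded (size xs) (fun l => sat (upd_list (upd e x d) xs l) f).
  rewrite upd_comm // IH //.
  by split; apply: sub_unbounded => l;
    rewrite [upd_list (upd _ a _) _ _]upd_list_upd // sat_upd_fresh.
have upd_a c d : upd (upd e a c) x d a = c by rewrite upd_neq ?upd_eq.
split=> unb c; have [d [cd unb_d]] := unb c; exists d.
- by rewrite upd_eq upd_a in cd; split; last exact/(sat_tail c).
- by rewrite upd_eq upd_a; split; last exact/(sat_tail c).
Qed.

End UnboundedFormula.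

Section LinearOrder.
Variables (L : language) (M : structure L).
Hypothesis lt_trans : forall a b c : M, ltM a b -> ltM b c -> ltM a c.
Hypothesis lt_total : forall a b : M, ltM a b \/ a = b \/ ltM b a.

Lemma below_trans (y z : M) l : below y l -> ltM y z -> below z l.
Proof. by elim: l => //= v l IH [vy ly] yz; split; [apply: lt_trans vy yz | apply: IH]. Qed.

Lemma below_cat (z : M) l1 l2 : below z l1 -> below z l2 -> below z (l1 ++ l2).
Proof. by elim: l1 => //= v l1 IH [vz l1z] l2z; split; last apply: IH. Qed.

Lemma exists_below : (forall a : M, exists b, ltM a b) -> forall l : seq M, exists z, below z l.
Proof.
move=> no_max; elim=> [|v l [z lz]] /=; first by exists (inhabitant M).
have [w vw] := no_max v; have [zw|[zw|wz]] := lt_total z w.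
- by exists w; split; last apply: below_trans lz zw.
- by exists z; split; rewrite // zw.
- by exists z; split; first apply: lt_trans vw wz.
Qed.

End LinearOrder.

Section Scheme.
Variables (L : language) (T : theory L).

Lemma skolem_bound phi x zs :
  has_skolem T -> wf_formula phi -> {subset fv phi <= x :: zs} ->
  exists tau : term L, wf_term tau /\ {subset vars_term tau <= zs} /\
    forall M : structure L, is_model M T -> forall e : nat -> M,
      (exists c, forall d, ltM c d -> ~ sat (upd e x d) phi) ->
      forall d, ltM (eval e tau) d -> ~ sat (upd e x d) phi.
Proof.
move=> skolem wf_phi fv_phi.
pose a := fresh (x :: zs).
have [ax a_zs] : a != x /\ a \notin zs.
  by move: (fresh_notin (x :: zs)); rewrite inE negb_or => /andP.
have a_phi : a \notin fv phi by apply: contra (fresh_notin (x :: zs)) => /fv_phi.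
pose theta := Forall x (Imp (Rel (ltsym L) [:: Var L a; Var L x]) (Neg phi)).
have wf_theta : wf_formula theta by rewrite /= ltsym_arity wf_phi.
have fv_theta : {subset fv theta <= a :: zs}.
  have -> : fv theta = [seq v <- [:: a; x] ++ fv phi ++ [::] | v != x] by [].
  move=> v; rewrite mem_filter cats0 mem_cat !inE => /andP[vx /orP[/predU1P[->|]|/fv_phi]].
  - exact: mem_head.
  - by rewrite (negbTE vx).
  - by rewrite inE (negbTE vx) /= => v_zs; apply/predU1P; right.
have [tau [wf_tau [vars_tau tau_spec]]] := skolem theta a zs wf_theta a_zs fv_theta.
exists tau; do 2!split=> //.
move=> M model_M e [c bound_c] d tau_d phi_d.
have upd_a b b' : upd (upd e a b) x b' a = b by rewrite upd_neq ?upd_eq.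
have sat_phi b b' : sat (upd (upd e a b) x b') phi <-> sat (upd e x b') phi.
  by rewrite upd_comm // sat_upd_fresh.
apply: (tau_spec M model_M e _ d) => /=.
- by exists c => d'; rewrite upd_a upd_eq sat_phi; apply: bound_c.
- by rewrite upd_a upd_eq.
- exact/sat_phi.
Qed.

Lemma inaccessible_term_bound tau zs :
  inaccessibility T -> wf_term tau -> uniq zs -> {subset vars_term tau <= zs} ->
  forall M : structure L, is_model M T -> forall (e : nat -> M) (z0 : M),
    exists z1, ltM z0 z1 /\ forall tv, size tv = size zs -> below z0 tv ->
      ltM (eval (upd_list e zs tv) tau) z1.
Proof.
move=> inacc wf_tau uniq_zs vars_tau M model_M e z0.
pose x := fresh zs; have x_zs : x \notin zs := fresh_notin zs.
have x_tau : x \notin vars_term tau by apply: contra x_zs => /vars_tau.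
have fv_graph : {subset fv (Eq (Var L x) tau) <= [:: x] ++ zs}.
  move=> v; rewrite /= inE => /predU1P[->|/vars_tau v_zs]; first exact: mem_head.
  by apply/predU1P; right.
have uniq_xzs : uniq ([:: x] ++ zs) by rewrite /= x_zs.
have [z1 [z01 graph_z1]] :=
  inacc _ [:: x] zs (wf_tau : wf_formula (Eq (Var L x) tau)) uniq_xzs fv_graph M model_M e z0.
exists z1; split=> // tv size_tv tv_z0.
have [ys1 [size_ys1 [ys1_z1 graph_ys1]]] := graph_z1 [:: eval (upd_list e zs tv) tau] erefl.
case: ys1 size_ys1 ys1_z1 graph_ys1 => [|v [|??]] //= _ [vz1 _] graph_v.
have := graph_v tv size_tv tv_z0; rewrite /= !upd_list_upd // !upd_eq !eval_upd_fresh //.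
by case=> /(_ erefl) <-.
Qed.

Lemma regularity1_of_inaccessibility :
  has_skolem T -> lt_linear T -> inaccessibility T -> regularity_for (fun n => n = 1) T.
Proof.
move=> skolem linear inacc phi [|x [|??]] ys ts //= _ wf_phi /andP[x_yts uniq_yts] fv_phi.
move=> M model_M e y0 bs size_bs unb.
have [_ [lt_trans lt_total]] := linear M model_M.
have [tau [wf_tau [vars_tau tau_bound]]] := skolem_bound skolem wf_phi fv_phi.
have [z0 [y0_z0 bs_z0]] : exists z0, below z0 (y0 :: bs).
  by apply: exists_below => // c; have [d [cd _]] := unb c; exists d.
have [z1 [_ tau_z1]] := inaccessible_term_bound inacc wf_tau uniq_yts vars_tau model_M e z0.
apply: NNPP => no_yv1.
have [x0 [z1_x0 [yv [size_yv [yv_y0 phi_x0]]]]] := unb z1.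
pose E := upd_list (upd_list e ys yv) ts bs.
have E_upd d : upd_list (upd_list (upd e x d) ys yv) ts bs = upd E x d.
  by move: x_yts; rewrite mem_cat negb_or => /andP[x_ys x_ts]; rewrite !upd_list_upd.
have bounded : exists c, forall d, ltM c d -> ~ sat (upd E x d) phi.
  apply: NNPP => unb_yv; apply: no_yv1; exists yv; split=> //; split=> // c.
  apply: NNPP => no_d; apply: unb_yv; exists c => d cd phi_d; apply: no_d.
  by exists d; rewrite E_upd.
have tau_x0 : ltM (eval E tau) x0.
  apply: (lt_trans _ z1 _ _ z1_x0); rewrite /E -upd_list_cat //; apply: tau_z1.
  - by rewrite !size_cat size_yv size_bs.
  - by apply: below_cat => //; exact: (below_trans lt_trans) yv_y0 y0_z0.
by apply: tau_bound tau_x0 _; rewrite // -E_upd.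
Qed.

Lemma regularity_upd P phi x xs ys ts :
  regularity_for P T -> P (size xs) -> wf_formula phi ->
  uniq (x :: xs ++ ys ++ ts) -> {subset fv phi <= x :: xs ++ ys ++ ts} ->
  forall M : structure L, is_model M T ->
  forall (e : nat -> M) (d y0 : M) (bs : seq M), size bs = size ts ->
  unbounded (size xs) (fun xv => exists yv, size yv = size ys /\ below y0 yv /\
    sat (upd_list (upd_list (upd_list (upd e x d) xs xv) ys yv) ts bs) phi) ->
  exists yv1, size yv1 = size ys /\ below y0 yv1 /\ unbounded (size xs) (fun xv =>
    sat (upd_list (upd_list (upd_list (upd e x d) xs xv) ys yv1) ts bs) phi).
Proof.
move=> reg Pxs wf_phi uniq_vars fv_phi M model_M e d y0 bs size_bs unb.
have /and3P[x_xs x_ys x_ts] : [&& x \notin xs, x \notin ys & x \notin ts].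
  by move: uniq_vars => /andP[]; rewrite !mem_cat !negb_or.
have env_tail xv yv :
    upd_list (upd_list (upd_list e xs xv) ys yv) (ts ++ [:: x]) (bs ++ [:: d]) =
    upd_list (upd_list (upd_list (upd e x d) xs xv) ys yv) ts bs.
  by rewrite upd_list_cat //= !upd_list_upd.
have perm_vars : perm_eq (x :: xs ++ ys ++ ts) (xs ++ ys ++ ts ++ [:: x]).
  by rewrite !catA cats1 perm_sym perm_rcons.
have [|v /fv_phi|||yv [size_yv [yv_y0 unb_yv]]] :=
  reg phi xs ys (ts ++ [:: x]) Pxs wf_phi _ _ M model_M e y0 (bs ++ [:: d]).
- by rewrite -(perm_uniq perm_vars).
- by rewrite (perm_mem perm_vars).
- by rewrite !size_cat size_bs.
- by apply: sub_unbounded unb => xv [yv yv_spec]; exists yv; rewrite env_tail.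
by exists yv; do 2!split=> //; apply: sub_unbounded unb_yv => xv; rewrite env_tail.
Qed.

Lemma regularity_succ k :
  regularity_for (fun n => n = 1) T -> regularity_for (fun n => n = k) T ->
  regularity_for (fun n => n = k.+1) T.
Proof.
move=> reg1 regk phi [|x xs] ys ts //= [size_xs] wf_phi uniq_vars fv_phi.
move=> M model_M e y0 bs size_bs unb.
have /andP[x_vars uniq_xyts] := uniq_vars.
move: (uniq_xyts); rewrite cat_uniq => /and3P[_ /hasPn yts_xs uniq_yts].
have [ys_xs ts_xs] : {in ys, forall v, v \notin xs} /\ {in ts, forall v, v \notin xs}.
  by split=> v v_in; apply: yts_xs; rewrite mem_cat v_in ?orbT.
pose a := fresh (x :: xs ++ ys ++ ts).
have a_phi : a \notin fv phi by apply: contra (fresh_notin (x :: xs ++ ys ++ ts)) => /fv_phi.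
have a_xs : a \notin xs.
  by apply: contra (fresh_notin (x :: xs ++ ys ++ ts)) => a_xs; rewrite inE mem_cat a_xs orbT.
pose psi := unbounded_formula a xs phi.
have sat_psi d yv : sat (upd_list (upd_list (upd e x d) ys yv) ts bs) psi <->
    unbounded (size xs) (fun xv =>
      sat (upd_list (upd_list (upd_list (upd e x d) xs xv) ys yv) ts bs) phi).
  rewrite sat_unbounded_formula //.
  by split; apply: sub_unbounded => xv;
    rewrite (upd_list_comm _ _ _ ts_xs) (upd_list_comm _ _ _ ys_xs).
have unb_psi : unbounded 1 (fun xv => exists yv, size yv = size ys /\ below y0 yv /\
    sat (upd_list (upd_list (upd_list e [:: x] xv) ys yv) ts bs) psi).
  move=> c; have [d [cd unb_d]] := unb c; exists d; split=> //=.
  have [yv [size_yv [yv_y0 unb_yv]]] :=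
    regularity_upd regk size_xs wf_phi uniq_vars fv_phi model_M size_bs unb_d.
  by exists yv; do 2!split=> //; apply/sat_psi.
have fv_psi : {subset fv psi <= [:: x] ++ ys ++ ts}.
  move=> v /fv_unbounded_formula[/fv_phi]; rewrite /= !(inE, mem_cat).
  by case: (v == x) (v \in xs) => [] [].
have uniq_psi_vars : uniq ([:: x] ++ ys ++ ts).
  by move: x_vars; rewrite /= !mem_cat !negb_or => /and3P[_ -> ->].
have [yv1 [size_yv1 [yv1_y0 unb_yv1]]] := reg1 psi [:: x] ys ts erefl
  (wf_unbounded_formula _ _ wf_phi) uniq_psi_vars fv_psi M model_M e y0 bs size_bs unb_psi.
exists yv1; split=> //; split=> // c.
have [d [cd psi_d]] := unb_yv1 c; exists d; split=> //.
exact/sat_psi.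
Qed.

Lemma regularity0 : regularity_for (fun n => n = 0) T.
Proof. by move=> phi [|??] ys ts //= _ _ _ _ M _ e y0 bs _ [yv yv_spec]; exists yv. Qed.

Lemma regularity_of_regularity1 :
  regularity_for (fun n => n = 1) T -> regularity_for (fun _ => True) T.
Proof.
move=> reg1 phi xs; have reg : regularity_for (fun n => n = size xs) T.
  by elim: (size xs) => [|k]; [exact: regularity0 | exact: regularity_succ].
by move=> ys ts _; apply: reg.
Qed.

End Scheme.

Theorem lemma2p3 (L : language) (T : theory L) :
  L_theory T -> complete T -> has_skolem T -> lt_linear T ->
  (inaccessibility T -> regularity_for (fun n => n = 1%N) T) /\
  (regularity_for (fun n => n = 1%N) T -> regularity_for (fun _ => True) T).
Proof.
move=> _ _ skolem linear; split; last exact: regularity_of_regularity1.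
exact: regularity1_of_inaccessibility.
Qed.
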